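(* Let $\xi$ be a model and let $\phi$ be the unique minimizer of $P_{0,\xi}$ on $\mathcal{C}$. Then $\phi$ is constant on $[0,1]$ if and only if $\xi(t)=a t^2$ for some $a>0$ (i.e. $\xi=\xi_{SK}$).
   Context: A model is $\xi(t)=\sum_{p\ge2}\beta_p^2t^p$, real $\beta_p$ not all zero, with $\xi(1+\epsilon)<\infty$ for some $\epsilon>0$; $\xi_{SK}$ denotes a model with only the $p=2$ term, $\xi(t)=\beta_2^2t^2$. $\mathcal{C}$ is the set of $\phi\in C([0,1])$ with $\phi\ge0$, non-increasing and concave, and $P_{0,\xi}(\phi)=\int_0^1\big(\xi''(x)\phi(x)+\frac1{\phi(x)}\big)dx$. *)

From HB Require Import structures.
From mathcomp Require Import all_boot all_order all_algebra.
From mathcomp Require Import all_classical all_reals all_analysis.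
Set Implicit Arguments. Unset Strict Implicit. Unset Printing Implicit Defensive.
Import Order.TTheory GRing.Theory Num.Theory.
Import numFieldNormedType.Exports.
Local Open Scope classical_set_scope.
Local Open Scope ring_scope.

Section Defs.
Variable R : realType.

Definition xi (beta : nat -> R) (t : R) : R :=
  limn (fun n => \sum_(2 <= p < n) (beta p ^+ 2 * t ^+ p)).

Definition is_model (beta : nat -> R) : Prop :=
  (exists p, (2 <= p)%N /\ beta p != 0) /\
  exists eps : R, 0 < eps /\
    (\sum_(2 <= p <oo) ((beta p ^+ 2 * (1 + eps) ^+ p)%:E) < +oo)%E.

Definition is_SK (beta : nat -> R) : Prop :=
  exists a : R, 0 < a /\ forall t : R, xi beta t = a * t ^+ 2.

Definition in_C (phi : R -> R) : Prop :=
  {within `[0, 1], continuous phi} /\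
  (forall x, x \in `[0, 1] -> 0 <= phi x) /\
  (forall x y, x \in `[0, 1] -> y \in `[0, 1] -> x <= y -> phi y <= phi x) /\
  (forall x y s, x \in `[0, 1] -> y \in `[0, 1] -> s \in `[0, 1] ->
     (1 - s) * phi x + s * phi y <= phi ((1 - s) * x + s * y)).

Definition P_integrand (beta : nat -> R) (phi : R -> R) (x : R) : \bar R :=
  if phi x == 0 then +oo%E
  else ((derive1n 2 (xi beta)) x * phi x + (phi x)^-1)%:E.

Definition P0 (beta : nat -> R) (phi : R -> R) : \bar R :=
  (\int[@lebesgue_measure R]_(x in `[0%R, 1%R]) P_integrand beta phi x)%E.

Definition is_minimizer (beta : nat -> R) (phi : R -> R) : Prop :=
  in_C phi /\ forall psi, in_C psi -> (P0 beta phi <= P0 beta psi)%E.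

End Defs.

From HB Require Import structures.
From mathcomp Require Import all_boot all_order all_algebra.
From mathcomp Require Import all_classical all_reals all_analysis.
From mathcomp Require Import ring lra.
Import Order.TTheory GRing.Theory Num.Theory.
Import numFieldNormedType.Exports.
Local Open Scope classical_set_scope.
Local Open Scope ring_scope.

(* If [xi(t) = a t^2], then [xi'' = 2a] and the integrand [2a phi + 1/phi] of
   [P0] is minimized pointwise by the constant [1/sqrt(2a)], which by uniqueness
   is the minimizer.  Conversely, let the minimizer be a constant [c]; [c > 0]
   because [P0] is infinite at [0] but finite at [1].  The competitors [c + e]
   and [c - e x] lie in [C] for small [e > 0]; expanding [P0] to first order in
   [e] gives [xi'(1) >= 1/c^2] and, since [int_0^1 x xi''(x) dx = xi'(1) - xi(1)],
   [xi'(1) <= xi(1) + 1/(2 c^2)].  Hence [xi'(1) <= 2 xi(1)], that is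
   [sum_p (p - 2) beta_p^2 <= 0], so [beta_p = 0] for every [p >= 3].
   Since [xi] is a power series of radius [> 1], all derivatives are computed
   term by term. *)

Set Implicit Arguments.
Unset Strict Implicit.
Unset Printing Implicit Defensive.

Section pseries_derivatives.
Variable R : realType.
Implicit Types (f : R ^nat) (r x z : R).

Lemma natS_mul_expr_subr_le (a b : R) n : 0 <= a -> a < b ->
  n.+1%:R * a ^+ n * (b - a) <= b ^+ n.+1.
Proof.
move=> a0 ab; elim: n => [|n IH]; first by rewrite expr0 mulr1 expr1 mul1r; lra.
have anb : a ^+ n.+1 <= b ^+ n.+1 by rewrite lerXn2r ?nnegrE //; lra.
have aIH : a * (n.+1%:R * a ^+ n * (b - a)) <= a * b ^+ n.+1 by rewrite ler_wpM2l.
have anbB : a ^+ n.+1 * (b - a) <= b ^+ n.+1 * (b - a) by rewrite ler_wpM2r //; lra.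
rewrite [b ^+ _.+1]exprS -natr1; rewrite exprS in anb anbB aIH *.
set u := a ^+ n in aIH anbB anb *; set v := b ^+ n.+1 in aIH anbB *.
have -> : (n.+1%:R + 1) * (a * u) * (b - a) =
  a * (n.+1%:R * u * (b - a)) + a * u * (b - a) by ring.
have -> : b * v = a * v + v * (b - a) by ring.
exact: lerD.
Qed.

Lemma is_cvg_series_shiftS (u : R ^nat) :
  cvgn (series u) -> cvgn (series (fun i => u i.+1)).
Proof.
move=> /cvg_ex[l ul].
have -> : series (fun i => u i.+1) = (fun n => series u n.+1 - u 0%N).
  by apply/funext => n; rewrite /series /= big_nat_recl //= addrAC subrr add0r.
by apply: is_cvgB (is_cvg_cst _); apply/cvg_ex; exists l; rewrite /= cvg_shiftS.
Qed.

(* Compare [(i+1) |f (i+1)| |z|^i] with the terms of the series at a radius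
   [w] strictly between [|z|] and [|x|]. *)
Lemma is_cvg_pseries_diffs_inside f x z : cvgn (pseries f x) -> `|z| < `|x| ->
  cvgn (pseries (pseries_diffs f) z).
Proof.
move=> Cx zx; set w := (`|z| + `|x|) / 2.
have zw : `|z| < w by rewrite /w; have := normr_ge0 z; lra.
have wx : `|w| < `|x| by rewrite ger0_norm /w; have := normr_ge0 z; lra.
have w0 : 0 < w by have := normr_ge0 z; lra.
set g := fun i => `|f i| * w ^+ i.
have Cg : cvgn (series (fun i => g i.+1)).
  exact/is_cvg_series_shiftS/(is_cvg_pseries_inside_norm Cx wx).
apply: normed_cvg.
apply: (@series_le_cvg _ _ ((w - `|z|)^-1 *: (fun i => g i.+1))).
- by move=> n /=.
- move=> n; rewrite /= /g; apply: mulr_ge0; first by rewrite invr_ge0; lra.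
  by rewrite mulr_ge0 // exprn_ge0 // ltW.
- move=> n; rewrite /= /g /pseries_diffs !normrM normrX normr_nat.
  rewrite ler_pdivlMl; last by lra.
  have -> : (w - `|z|) * (n.+1%:R * `|f n.+1| * `|z| ^+ n) =
     `|f n.+1| * (n.+1%:R * `|z| ^+ n * (w - `|z|)) by ring.
  by rewrite ler_wpM2l // natS_mul_expr_subr_le.
- exact: is_cvg_seriesZ.
Qed.

Definition pseries_diffs_cvg f r := forall k z, `|z| < r ->
  cvgn (pseries (iter k (@pseries_diffs R) f) z).

Lemma pseries_diffs_cvg_norm f x : cvgn (pseries f x) -> pseries_diffs_cvg f `|x|.
Proof.
move=> Cx k; elim: k => [|k IH] z zx /=; first exact: is_cvg_pseries_inside Cx zx.
set z' := (`|z| + `|x|) / 2.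
have z'0 : 0 <= z' by rewrite /z'; have := normr_ge0 z; lra.
apply: (@is_cvg_pseries_diffs_inside _ z').
  by apply: IH; rewrite ger0_norm // /z'; lra.
by rewrite (ger0_norm z'0) /z'; lra.
Qed.

Lemma pseries_diffs_cvgS f r :
  pseries_diffs_cvg f r -> pseries_diffs_cvg (pseries_diffs f) r.
Proof. by move=> Cf k z zr; rewrite -iterSr; exact: Cf. Qed.

Definition psum f x := limn (pseries f x).

Lemma psum0 f : psum f 0 = f 0%N.
Proof.
apply: cvg_lim => //; rewrite -cvg_shiftS.
have -> : (fun n => pseries f 0 n.+1) = cst (f 0%N).
  apply/funext => n; rewrite /pseries /series /= big_nat_recl //= expr0 mulr1.
  by rewrite big1 ?addr0 // => i _; rewrite expr0n mulr0.
exact: cvg_cst.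
Qed.

Lemma is_derive_psum f r x : pseries_diffs_cvg f r -> `|x| < r ->
  is_derive x 1 (psum f) (psum (pseries_diffs f) x).
Proof.
move=> Cf xr; set K := (`|x| + r) / 2.
have K0 : 0 <= K by rewrite /K; have := normr_ge0 x; lra.
have Kr : `|K| < r by rewrite ger0_norm // /K; lra.
have xK : `|x| < `|K| by rewrite (ger0_norm K0) /K; lra.
exact: pseries_snd_diffs (Cf 0%N _ Kr) (Cf 1%N _ Kr) (Cf 2%N _ Kr) xK.
Qed.

Lemma derive1_psum f r x : pseries_diffs_cvg f r -> `|x| < r ->
  derive1 (psum f) x = psum (pseries_diffs f) x.
Proof. by move=> Cf xr; rewrite derive1E; have [_ ->] := is_derive_psum Cf xr. Qed.

Lemma derive2_psum f r x : pseries_diffs_cvg f r -> `|x| < r ->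
  derive1n 2 (psum f) x = psum (pseries_diffs (pseries_diffs f)) x.
Proof.
move=> Cf xr; rewrite /= derive1E.
rewrite (@near_eq_derive _ _ _ _ (psum (pseries_diffs f))); last first.
  have : x \in `]-r, r[ by rewrite in_itv /= -ltr_norml.
  move/near_in_itvoo; apply: filterS => y; rewrite in_itv /= -ltr_norml => yr.
  exact: derive1_psum Cf yr.
by rewrite -derive1E; exact: derive1_psum (pseries_diffs_cvgS Cf) xr.
Qed.

End pseries_derivatives.

Section continuity_on_interval.
Variables (R : realType) (i : interval R).
Implicit Types f g : R -> R.

Lemma in_continuousD f g : {in i, continuous f} -> {in i, continuous g} ->
  {in i, continuous (fun x => f x + g x)}.
Proof. by move=> cf cg x ix; apply: continuousD; [exact: cf|exact: cg]. Qed.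

Lemma in_continuousB f g : {in i, continuous f} -> {in i, continuous g} ->
  {in i, continuous (fun x => f x - g x)}.
Proof. by move=> cf cg x ix; apply: continuousB; [exact: cf|exact: cg]. Qed.

Lemma in_continuousM f g : {in i, continuous f} -> {in i, continuous g} ->
  {in i, continuous (fun x => f x * g x)}.
Proof. by move=> cf cg x ix; apply: continuousM; [exact: cf|exact: cg]. Qed.

Lemma in_continuousV f : {in i, continuous f} -> {in i, forall x, f x != 0} ->
  {in i, continuous (fun x => (f x)^-1)}.
Proof. by move=> cf f0 x ix; apply: continuousV; [exact: f0|exact: cf]. Qed.

Lemma in_continuous_cst (k : R) : {in i, continuous (fun _ => k)}.
Proof. by move=> x _; exact: cst_continuous. Qed.

Lemma in_continuous_opp : {in i, continuous (fun x : R => - x)}.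
Proof. by move=> x _; apply: continuousN; exact: cvg_id. Qed.

End continuity_on_interval.

Arguments in_continuous_cst {R i} k.
Arguments in_continuous_opp {R i}.

Lemma is_derive_continuous (R : realType) (F : R -> R) (x d : R) :
  is_derive x 1 F d -> {for x, continuous F}.
Proof.
by move=> [dF _]; apply: differentiable_continuous; exact/derivable1_diffP.
Qed.

Lemma is_derive_mull (R : realType) (k x : R) : is_derive x 1 (fun y => k * y) k.
Proof.
apply: is_derive_eq (is_deriveZ k (is_derive_id x 1)) _.
by rewrite /GRing.scale /= mulr1.
Qed.

Section integral_unit_interval.
Variable R : realType.
Local Notation mu := (@lebesgue_measure R).
Implicit Types f g k : R -> R.

Lemma lebesgue_measure01 : mu `[0%R, 1%R] = 1%E.
Proof. by rewrite lebesgue_measure_itv /= lte_fin ltr01 oppr0 adde0. Qed.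

Lemma integral01_cst (v : \bar R) : (\int[mu]_(x in `[0%R, 1%R]) cst v x = v)%E.
Proof.
rewrite integral_cst // -[RHS]mule1; congr (_ * _)%E.
exact: lebesgue_measure01.
Qed.

Lemma Rintegral01_cst (v : R) : \int[mu]_(x in `[0%R, 1%R]) v = v.
Proof.
rewrite Rintegral_cst // -[RHS]mulr1; congr (_ * _).
by rewrite -[RHS]/(fine 1%E); congr fine; exact: lebesgue_measure01.
Qed.

Lemma ge0_le_integral_nonmeasurable (D : set R) (f1 f2 : R -> \bar R) :
  (forall x, D x -> (0 <= f1 x)%E) -> (forall x, D x -> (f1 x <= f2 x)%E) ->
  (\int[mu]_(x in D) f1 x <= \int[mu]_(x in D) f2 x)%E.
Proof.
move=> f10 f12.
have f20 x : D x -> (0 <= f2 x)%E.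
  by move=> Dx; exact: le_trans (f10 x Dx) (f12 x Dx).
rewrite !ge0_integralE //; apply: ereal_sup_le => _ [h hf <-]; exists h => // x.
apply: le_trans (hf x) _.
by rewrite /patch; case: ifP => // /set_mem Dx; exact: f12.
Qed.

Lemma integrable01 f : {in `[0, 1], continuous f} ->
  mu.-integrable `[0%R, 1%R] (EFin \o f).
Proof.
move=> cf; apply: continuous_compact_integrable; first exact: segment_compact.
by apply: continuous_in_subspaceT => x; rewrite inE => /cf.
Qed.

Lemma integral01_EFin f : {in `[0, 1], continuous f} ->
  (\int[mu]_(x in `[0%R, 1%R]) (f x)%:E = (\int[mu]_(x in `[0%R, 1%R]) f x)%:E)%E.
Proof.
by move=> cf; rewrite /Rintegral fineK // integrable_fin_num // integrable01.
Qed.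

Lemma Rintegral01_le_affine f g k (e d : R) :
  {in `[0, 1], continuous f} -> {in `[0, 1], continuous g} ->
  {in `[0, 1], continuous k} ->
  {in `[0, 1], forall x, f x <= g x + e * k x + d} ->
  \int[mu]_(x in `[0%R, 1%R]) f x <=
  \int[mu]_(x in `[0%R, 1%R]) g x + e * \int[mu]_(x in `[0%R, 1%R]) k x + d.
Proof.
move=> cf cg ck fle.
have cek := in_continuousM (in_continuous_cst e) ck.
have cgk := in_continuousD cg cek.
rewrite -RintegralZl ?integrable01 // -RintegralD ?integrable01 //.
rewrite -[X in _ <= _ + X]Rintegral01_cst -RintegralD ?integrable01 //;
  last exact: in_continuous_cst.
apply: le_Rintegral => //; first exact: integrable01.
exact/integrable01/(in_continuousD cgk (in_continuous_cst d)).
Qed.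

Lemma Rintegral01_derive (F f : R -> R) :
  {in `[0, 1], forall x : R, is_derive x 1 F (f x)} -> {in `[0, 1], continuous f} ->
  \int[mu]_(x in `[0%R, 1%R]) f x = F 1 - F 0.
Proof.
move=> dF cf; apply: EFin_inj; rewrite -integral01_EFin // EFinB.
have in01 x : 0 < x < 1 -> x \in `[0, 1].
  by move=> /andP[x0 x1]; rewrite in_itv /= !ltW.
have i0 : (0 : R) \in `[0, 1] by rewrite in_itv /= lexx ler01.
have i1 : (1 : R) \in `[0, 1] by rewrite in_itv /= lexx ler01.
apply: continuous_FTC2 ltr01 _ _ _.
- by apply: continuous_in_subspaceT => x; rewrite inE => /cf.
- split.
  + by move=> x; rewrite in_itv /= => /in01 /dF [].
  + exact/cvg_at_right_filter/(is_derive_continuous (dF _ i0)).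
  + exact/cvg_at_left_filter/(is_derive_continuous (dF _ i1)).
- move=> x; rewrite in_itv /= => /in01 x01.
  by have [_ <-] := dF x x01; rewrite derive1E.
Qed.

End integral_unit_interval.

Section real_inequalities.
Variable R : realFieldType.

Lemma invrD_le_taylor (c u e : R) : 0 < c -> `|u| <= e -> e <= c / 2 ->
  (c + u)^-1 <= c^-1 - u / c ^+ 2 + 2 * e ^+ 2 / c ^+ 3.
Proof.
move=> c0; rewrite ler_norml => /andP[ue eu] ec.
have cu0 : 0 < c + u by lra.
rewrite -subr_ge0.
have -> : c^-1 - u / c ^+ 2 + 2 * e ^+ 2 / c ^+ 3 - (c + u)^-1 =
   (c * (2 * e ^+ 2 - u ^+ 2) + 2 * e ^+ 2 * u) / (c ^+ 3 * (c + u)).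
  by field; rewrite !gt_eqF ?exprn_gt0.
apply: divr_ge0; last by rewrite mulr_ge0 // ?exprn_ge0 // ltW.
have : u ^+ 2 <= e ^+ 2 by nra.
nra.
Qed.

Lemma ge0_first_order (A k e0 : R) : 0 < e0 ->
  (forall e, 0 < e -> e <= e0 -> 0 <= e * A + k * e ^+ 2) -> 0 <= A.
Proof.
move=> e00 H; rewrite leNgt; apply/negP => A0.
have k1 : 0 < `|k| + 1 by have := normr_ge0 k; lra.
pose e := Num.min e0 (- A / (2 * (`|k| + 1))).
have e0' : 0 < e by rewrite /e lt_min e00 /= divr_gt0 //; lra.
have ee0 : e <= e0 by rewrite /e ge_min lexx.
have eA : e * (2 * (`|k| + 1)) <= - A.
  by rewrite -ler_pdivlMr ?mulr_gt0 // /e ge_min lexx orbT.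
have : k * e ^+ 2 <= (`|k| + 1) * e ^+ 2.
  by rewrite ler_wpM2r ?exprn_ge0 //; have := ler_norm k; lra.
have := H e e0' ee0; nra.
Qed.

Lemma mulr_addr_inv_min (k c p : R) : 0 < k -> 0 < c -> 0 < p ->
  c ^+ 2 = k^-1 -> k * c + c^-1 <= k * p + p^-1.
Proof.
move=> k0 c0 p0 ck.
have kc2 : k * c ^+ 2 = 1 by rewrite ck mulfV ?gt_eqF.
have -> : c^-1 = k * c by apply: (@mulfI _ c); rewrite ?gt_eqF // mulfV ?gt_eqF //; lra.
rewrite -subr_ge0.
have -> : k * p + p^-1 - (k * c + k * c) = (k * (p - c) ^+ 2 + (1 - k * c ^+ 2)) / p.
  by field; rewrite gt_eqF.
rewrite kc2 subrr addr0; apply: divr_ge0 (ltW p0).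
exact: mulr_ge0 (ltW k0) (sqr_ge0 _).
Qed.

End real_inequalities.

Section xi_power_series.
Variables (R : realType) (beta : nat -> R).

Definition xi_coef : R ^nat := fun p => if (2 <= p)%N then beta p ^+ 2 else 0.

Lemma pseries_xi_coef (t : R) n :
  pseries xi_coef t n = \sum_(2 <= p < n) beta p ^+ 2 * t ^+ p.
Proof.
rewrite /pseries /series /=; case: (ltnP n 2) => n2.
  rewrite [RHS]big_geq 1?ltnW // big_nat big1 // => i /andP[_ ilt].
  by rewrite /xi_coef ltn_geF ?mul0r // (ltn_trans ilt n2).
rewrite (@big_cat_nat _ _ _ 2) //= big_nat big1 ?add0r; last first.
  by move=> i /andP[_ i2]; rewrite /xi_coef ltn_geF ?mul0r.
by rewrite !big_nat; apply: eq_bigr => i /andP[i2 _]; rewrite /xi_coef i2.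
Qed.

Lemma xi_psum : xi beta = psum xi_coef.
Proof.
apply/funext => t; rewrite /xi /psum; congr (limn _).
by apply/funext => n; rewrite pseries_xi_coef.
Qed.

Lemma is_cvg_pseries_xi_coef (t : R) : 0 <= t ->
  (\sum_(2 <= p <oo) ((beta p ^+ 2 * t ^+ p)%:E) < +oo)%E ->
  cvgn (pseries xi_coef t).
Proof.
move=> t0 Hfin.
set L := (\sum_(2 <= p <oo) _)%E in Hfin.
have le_L n : ((\sum_(2 <= p < n) beta p ^+ 2 * t ^+ p)%:E <= L)%E.
  rewrite -sumEFin; apply: nneseries_lim_ge => p _ _.
  by rewrite lee_fin mulr_ge0 ?sqr_ge0 ?exprn_ge0.
have Lfin : L \is a fin_num.
  by rewrite ge0_fin_numE // (le_trans _ (le_L 0%N)) // big_geq.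
have -> : pseries xi_coef t = fun n => \sum_(2 <= p < n) beta p ^+ 2 * t ^+ p.
  by apply/funext => n; rewrite pseries_xi_coef.
apply: nondecreasing_is_cvgn.
  by apply: nondecreasing_series => p _ _; rewrite mulr_ge0 ?sqr_ge0 ?exprn_ge0.
by exists (fine L) => _ [n _ <-]; rewrite -lee_fin fineK.
Qed.

Lemma xi_coef_excess_ge0 i : 0 <= (i%:R - 2) * xi_coef i.
Proof.
rewrite /xi_coef; case: ifP => [i2|_]; last by rewrite mulr0.
by rewrite mulr_ge0 ?sqr_ge0 // subr_ge0 (ler_nat _ 2).
Qed.

(* [xi'(1) - 2 xi(1)] is the sum of the nonnegative terms [(p - 2) beta_p^2]. *)
Lemma beta_eq0_of_derive_le :
  cvgn (pseries xi_coef 1) -> cvgn (pseries (pseries_diffs xi_coef) 1) ->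
  psum (pseries_diffs xi_coef) 1 <= 2 * psum xi_coef 1 ->
  forall p, (3 <= p)%N -> beta p = 0.
Proof.
move=> C0 C1 xi'_le p p3.
pose T n := \sum_(0 <= i < n) (i%:R - 2) * xi_coef i.
have TE : T = fun n => series (fun i => i%:R * xi_coef i * 1 ^+ i.-1) n
                       - 2 * pseries xi_coef 1 n.
  apply/funext => n; rewrite /T /series /pseries /= mulr_sumr -sumrB.
  by apply: eq_bigr => i _; rewrite !expr1n !mulr1; ring.
have CT : T @ \oo --> psum (pseries_diffs xi_coef) 1 - 2 * psum xi_coef 1.
  by rewrite TE; apply: cvgB; [exact: pseries_diffs_equiv|exact: cvgMl_tmp].
have T_nd : nondecreasing_seq T.
  by apply: nondecreasing_series => n _ _; exact: xi_coef_excess_ge0.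
have T_le0 n : T n <= 0.
  apply: le_trans (nondecreasing_cvgn_le T_nd (cvgP _ CT) n) _.
  by rewrite (cvg_lim _ CT) // subr_le0.
have := T_le0 p.+1; rewrite /T big_nat_recr //= /xi_coef (leq_trans _ p3) //.
have : 0 <= \sum_(0 <= i < p) (i%:R - 2) * xi_coef i.
  by apply: sumr_ge0 => i _; exact: xi_coef_excess_ge0.
have : 1 <= p%:R - 2 :> R by rewrite lerBrDr (ler_nat _ 3).
move=> p1 S0 Sle; have bp : beta p ^+ 2 <= 0 by nra.
by apply/eqP; rewrite -sqrf_eq0 eq_le bp sqr_ge0.
Qed.

Lemma is_SK_of_beta_eq0 : (exists p, (2 <= p)%N /\ beta p != 0) ->
  (forall p, (3 <= p)%N -> beta p = 0) -> is_SK beta.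
Proof.
move=> [p [p2 bp]] beta_eq0.
have p_eq2 : p = 2%N.
  apply/eqP; rewrite eqn_leq p2 andbT leqNgt; apply/negP => /beta_eq0 b0.
  by rewrite b0 eqxx in bp.
subst p; exists (beta 2%N ^+ 2); split => [|t].
  by rewrite lt_neqAle sqr_ge0 andbT eq_sym sqrf_eq0.
apply: cvg_lim => //; rewrite -(cvg_shiftn 3) /=.
have -> : (fun n => \sum_(2 <= q < n + 3) beta q ^+ 2 * t ^+ q) =
          cst (beta 2%N ^+ 2 * t ^+ 2).
  apply/funext => n /=; rewrite big_ltn ?addn3 // big_nat big1 ?addr0 //.
  by move=> i /andP[i2 _]; rewrite beta_eq0 // expr0n mul0r.
exact: cvg_cst.
Qed.

End xi_power_series.

Lemma in_C_affine (R : realType) (a b : R) : b <= 0 ->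
  {in `[0, 1], forall x, 0 <= a + b * x} -> in_C (fun x => a + b * x).
Proof.
move=> b0 ge0; split; [|split; [exact: ge0|split]].
- apply: continuous_in_subspaceT => x _.
  apply: continuousD; first exact: cst_continuous.
  by apply: continuousM; [exact: cst_continuous|exact: cvg_id].
- by move=> x y _ _ xy; rewrite lerD2l ler_wnM2l.
- move=> x y s _ _ _.
  by rewrite le_eqVlt; apply/orP; left; apply/eqP; ring.
Qed.

Lemma in_C_cst (R : realType) (k : R) : 0 <= k -> in_C (fun _ => k).
Proof.
move=> k0; have -> : (fun _ => k) = (fun x => k + 0 * x).
  by apply/funext => x; rewrite mul0r addr0.
by apply: in_C_affine => // x _; rewrite mul0r addr0.
Qed.

Section xi_on_unit_interval.
Variables (R : realType) (beta : nat -> R) (r : R).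
Hypotheses (r_gt1 : 1 < r) (xi_cvg : pseries_diffs_cvg (xi_coef beta) r).
Local Notation mu := (@lebesgue_measure R).
Local Notation xi0 := (psum (xi_coef beta)).
Local Notation xi1 := (psum (pseries_diffs (xi_coef beta))).
Local Notation xi2 := (psum (pseries_diffs (pseries_diffs (xi_coef beta)))).

Let norm_lt_r (x : R) : x \in `[0, 1] -> `|x| < r.
Proof.
by rewrite in_itv /= => /andP[x0 x1]; rewrite ger0_norm // (le_lt_trans x1).
Qed.

Lemma is_derive_xi0 (x : R) : x \in `[0, 1] -> is_derive x 1 xi0 (xi1 x).
Proof. by move=> /norm_lt_r; exact: is_derive_psum. Qed.

Lemma is_derive_xi1 (x : R) : x \in `[0, 1] -> is_derive x 1 xi1 (xi2 x).
Proof. by move=> /norm_lt_r; exact/is_derive_psum/pseries_diffs_cvgS. Qed.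

Lemma continuous_xi2 : {in `[0, 1], continuous xi2}.
Proof.
move=> x /norm_lt_r xr; apply: is_derive_continuous.
exact/(is_derive_psum _ xr)/pseries_diffs_cvgS/pseries_diffs_cvgS.
Qed.

Lemma derive2_xi (x : R) : x \in `[0, 1] -> derive1n 2 (xi beta) x = xi2 x.
Proof. by move=> /norm_lt_r; rewrite xi_psum; exact: derive2_psum. Qed.

Lemma P0_pos_continuous (psi : R -> R) : {in `[0, 1], continuous psi} ->
  {in `[0, 1], forall x, 0 < psi x} ->
  P0 beta psi = (\int[mu]_(x in `[0%R, 1%R]) (xi2 x * psi x + (psi x)^-1))%:E.
Proof.
move=> psi_cont psi_gt0; rewrite -integral01_EFin; last first.
  apply: in_continuousD (in_continuousM continuous_xi2 psi_cont) _.
  by apply: in_continuousV => // x x01; rewrite gt_eqF ?psi_gt0.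
apply: eq_integral => x /[1!inE] x01.
by rewrite /P_integrand gt_eqF ?psi_gt0 // derive2_xi.
Qed.

Lemma cst_minimizer_gt0 (c : R) : 0 <= c ->
  (forall psi, in_C psi -> (P0 beta (fun _ => c) <= P0 beta psi)%E) -> 0 < c.
Proof.
move=> c_ge0 c_min; rewrite lt_neqAle c_ge0 andbT; apply/eqP => c0.
have := c_min _ (in_C_cst ler01).
have -> : P0 beta (fun _ => c) = (\int[mu]_(x in `[0%R, 1%R]) (cst +oo) x)%E.
  by apply: eq_integral => x _; rewrite /P_integrand -c0 eqxx.
by rewrite integral01_cst (P0_pos_continuous (in_continuous_cst 1)) ?leye_eq.
Qed.


Section constant_minimizer.
Variable c : R.
Hypotheses (c_gt0 : 0 < c)
  (c_min : forall psi, in_C psi -> (P0 beta (fun _ => c) <= P0 beta psi)%E).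

(* The integral is the right derivative of [P0 (c + e h)] at [e = 0]. *)
Lemma first_variation_ge0 (h : R -> R) : {in `[0, 1], continuous h} ->
  {in `[0, 1], forall x, `|h x| <= 1} ->
  (forall e, 0 < e -> e <= c / 2 -> in_C (fun x => c + e * h x)) ->
  0 <= \int[mu]_(x in `[0%R, 1%R]) (xi2 x * h x - h x / c ^+ 2).
Proof.
move=> h_cont h_le1 h_C.
apply: (@ge0_first_order _ _ (2 / c ^+ 3) (c / 2)); first by rewrite divr_gt0.
move=> e e_gt0 e_le; set psi := fun x => c + e * h x.
have eh_le x : x \in `[0, 1] -> `|e * h x| <= e.
  move=> x01; rewrite normrM gtr0_norm // -[leRHS]mulr1.
  by apply: ler_wpM2l; [exact: ltW|exact: h_le1].
have psi_gt0 : {in `[0, 1], forall x, 0 < psi x}.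
  by move=> x /eh_le; rewrite ler_norml /psi; lra.
have psi_cont : {in `[0, 1], continuous psi}.
  exact: in_continuousD (in_continuous_cst c)
    (in_continuousM (in_continuous_cst e) h_cont).
have := c_min (h_C e e_gt0 e_le).
rewrite (P0_pos_continuous psi_cont) // (P0_pos_continuous (in_continuous_cst c)) //.
rewrite lee_fin => P0_le.
suff : \int[mu]_(x in `[0%R, 1%R]) (xi2 x * psi x + (psi x)^-1) <=
    \int[mu]_(x in `[0%R, 1%R]) (xi2 x * c + c^-1) +
    e * \int[mu]_(x in `[0%R, 1%R]) (xi2 x * h x - h x / c ^+ 2) + 2 / c ^+ 3 * e ^+ 2.
  by lra.
apply: Rintegral01_le_affine.
- apply: in_continuousD (in_continuousM continuous_xi2 psi_cont) _.
  by apply: in_continuousV => // x x01; rewrite gt_eqF ?psi_gt0.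
- exact: in_continuousD (in_continuousM continuous_xi2 (in_continuous_cst c))
    (in_continuous_cst _).
- exact: in_continuousB (in_continuousM continuous_xi2 h_cont)
    (in_continuousM h_cont (in_continuous_cst _)).
- move=> x x01; have := invrD_le_taylor c_gt0 (eh_le x x01) e_le.
  rewrite /psi; nra.
Qed.

Let xi0_at0 : xi0 0 = 0.
Proof. by rewrite psum0. Qed.

Let xi1_at0 : xi1 0 = 0.
Proof. by rewrite psum0 /pseries_diffs /xi_coef /= mulr0. Qed.

Lemma xi1_ge_inv_sqr : (c ^+ 2)^-1 <= xi1 1.
Proof.
have := @first_variation_ge0 (fun _ => 1).
rewrite (@Rintegral01_derive _ (fun y => xi1 y - (c ^+ 2)^-1 * y)).
- rewrite xi1_at0 mulr1 mulr0 !subr0 subr_ge0; apply.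
  + exact: in_continuous_cst.
  + by move=> x _; rewrite normr1.
  + by move=> e e_gt0 _; apply: in_C_cst; rewrite mulr1 addr_ge0 // ltW.
- move=> x x01.
  apply: is_derive_eq (is_deriveB (is_derive_xi1 x01) (is_derive_mull _ _)) _.
  by rewrite mulr1 div1r.
- exact: in_continuousB (in_continuousM continuous_xi2 (in_continuous_cst 1))
    (in_continuous_cst _).
Qed.

Lemma xi1_le_xi0 : xi1 1 <= xi0 1 + (2 * c ^+ 2)^-1.
Proof.
set k := (2 * c ^+ 2)^-1.
have := @first_variation_ge0 (fun x => - x).
rewrite (@Rintegral01_derive _ (fun y => xi0 y - y * xi1 y + k * (y * y))).
- rewrite xi0_at0 !(mul0r, mulr0, mul1r, mulr1, subr0, addr0) => fv.
  suff : 0 <= xi0 1 - xi1 1 + k by lra.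
  apply: fv.
  + exact: in_continuous_opp.
  + by move=> x; rewrite in_itv /= normrN => /andP[x0 x1]; rewrite ger0_norm.
  move=> e e_gt0 e_le.
  have -> : (fun x => c + e * - x) = (fun x => c + - e * x).
    by apply/funext => x; rewrite mulrN mulNr.
  apply: in_C_affine => [|x]; first by rewrite oppr_le0 ltW.
  by rewrite in_itv /= => /andP[x0 x1]; rewrite mulNr subr_ge0; nra.
- move=> x x01.
  have dx := is_derive_id x (1 : R).
  apply: is_derive_eq (is_deriveD (is_deriveB (is_derive_xi0 x01)
    (is_deriveM dx (is_derive_xi1 x01))) (is_deriveZ k (is_deriveM dx dx))) _.
  by rewrite /GRing.scale /= /k; field; rewrite gt_eqF.
- exact: in_continuousB (in_continuousM continuous_xi2 in_continuous_opp)
    (in_continuousM in_continuous_opp (in_continuous_cst _)).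
Qed.

Lemma cst_minimizer_is_SK : (exists p, (2 <= p)%N /\ beta p != 0) -> is_SK beta.
Proof.
move=> beta_nz; apply: is_SK_of_beta_eq0 => //.
have n1 : `|1 : R| < r by rewrite normr1.
apply: beta_eq0_of_derive_le; [exact: xi_cvg 0%N 1 n1|exact: xi_cvg 1%N 1 n1|].
have := xi1_le_xi0; have := xi1_ge_inv_sqr.
have -> : (2 * c ^+ 2)^-1 = (c ^+ 2)^-1 / 2 by rewrite invfM mulrC.
lra.
Qed.

End constant_minimizer.

End xi_on_unit_interval.

Lemma derive2_xi_SK (R : realType) (beta : nat -> R) (a x : R) :
  (forall t, xi beta t = a * t ^+ 2) -> derive1n 2 (xi beta) x = 2 * a.
Proof.
move=> xi_sq.
have -> : xi beta = fun t => a * (t * t) by apply/funext => t; rewrite xi_sq expr2.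
rewrite /=; have -> : derive1 (fun t => a * (t * t)) = fun t => 2 * a * t.
  apply/funext => t; rewrite derive1E.
  have dt := is_derive_id t (1 : R).
  have [_ ->] := is_deriveZ a (is_deriveM dt dt).
  by rewrite /GRing.scale /=; ring.
by rewrite derive1E; have [_ ->] := is_derive_mull (2 * a) x.
Qed.

Lemma SK_cst_is_minimizer (R : realType) (beta : nat -> R) (a : R) : 0 < a ->
  (forall t, xi beta t = a * t ^+ 2) ->
  is_minimizer beta (fun _ => Num.sqrt (2 * a)^-1).
Proof.
move=> a_gt0 xi_sq; set c := Num.sqrt _.
have a2_gt0 : 0 < 2 * a by rewrite mulr_gt0.
have c_gt0 : 0 < c by rewrite sqrtr_gt0 invr_gt0.
have xi'' x := derive2_xi_SK x xi_sq.
split; first exact/in_C_cst/ltW.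
move=> psi [_ [psi_ge0 _]]; set k := 2 * a * c + c^-1.
have P0_c : P0 beta (fun _ => c) =
    (\int[@lebesgue_measure R]_(x in `[0%R, 1%R]) cst k%:E x)%E.
  by apply: eq_integral => x _; rewrite /P_integrand gt_eqF // xi''.
rewrite P0_c integral01_cst -[X in (X <= _)%E]integral01_cst.
apply: ge0_le_integral_nonmeasurable => x x01.
  by rewrite lee_fin addr_ge0 ?invr_ge0 ?mulr_ge0 // ltW.
rewrite /P_integrand; case: ifPn => [_|psi_neq0]; first exact: leey.
have psi_gt0 : 0 < psi x by rewrite lt_neqAle eq_sym psi_neq0 psi_ge0 // inE.
rewrite lee_fin xi'' mulr_addr_inv_min //.
by rewrite sqr_sqrtr // invr_ge0 ltW.
Qed.

Theorem lemma1p19 (R : realType) (beta : nat -> R) (phi : R -> R) :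
  is_model beta ->
  is_minimizer beta phi ->
  (forall psi : R -> R, is_minimizer beta psi ->
     forall x, x \in `[0, 1] -> psi x = phi x) ->
  ((exists c : R, forall x, x \in `[0, 1] -> phi x = c) <-> is_SK beta).
Proof.
move=> [beta_nz [eps [eps_gt0 xi_fin]]] [phi_C phi_min] phi_unique; split.
- move=> [c phi_c].
  have r_gt1 : 1 < 1 + eps by rewrite ltrDl.
  have r_ge0 : 0 <= 1 + eps by rewrite ltW // (lt_trans ltr01).
  have xi_cvg : pseries_diffs_cvg (xi_coef beta) (1 + eps).
    rewrite -[1 + eps]ger0_norm //.
    exact/pseries_diffs_cvg_norm/is_cvg_pseries_xi_coef.
  have c_min psi : in_C psi -> (P0 beta (fun _ => c) <= P0 beta psi)%E.
    move=> /phi_min; congr (_ <= _)%E; apply: eq_integral => x /[1!inE] x01.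
    by rewrite /P_integrand phi_c.
  have c_gt0 : 0 < c.
    have x0 : (0 : R) \in `[0, 1] by rewrite in_itv /= lexx ler01.
    by apply: (cst_minimizer_gt0 r_gt1 xi_cvg) c_min; rewrite -(phi_c 0 x0) phi_C.2.1.
  exact: (cst_minimizer_is_SK r_gt1 xi_cvg c_gt0 c_min beta_nz).
- move=> [a [a_gt0 xi_sq]]; exists (Num.sqrt (2 * a)^-1) => x x01.
  by rewrite -(phi_unique _ (SK_cst_is_minimizer a_gt0 xi_sq) x x01).
Qed.
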